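(* For every integer $k\ge7$, $c_{n_k^*}\ge\frac14+\frac{1}{8(n_k^* )^{2/3}-4}$, where $$n_k^*=2k+2\sum_{i=1}^{\lfloor\sqrt{k/2}\rfloor}\left(2\left\lfloor\frac{2k-2i^2-i}{2}\right\rfloor+i\right).$$
   Context: A weighted digraph $D=(V,A,w)$ is a digraph without loops or parallel arcs (opposite arcs allowed) with weights $w:A\to\mathbb{R}_{\ge0}$; $w(D)$ is the total arc weight. For a partition $(X,Y)$ of $V$, $w(X,Y)$ is the total weight of arcs from $X$ to $Y$, and $\mathrm{mac}(D)=\max_{(X,Y)}w(X,Y)$. For an integer $\nu\ge1$, $c_\nu$ is the supremum of reals $c\ge0$ such that every acyclic weighted digraph $D$ whose longest directed path has exactly $\nu$ vertices satisfies $\mathrm{mac}(D)\ge c\cdot w(D)$. *)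

From HB Require Import structures.
From mathcomp Require Import all_boot all_order all_algebra.
From mathcomp Require Import boolp classical_sets reals constructive_ereal ereal exp.
Set Implicit Arguments. Unset Strict Implicit. Unset Printing Implicit Defensive.
Import Order.TTheory GRing.Theory Num.Theory.

(* A weighted digraph on the vertex set 'I_n: an arc relation [A] (no loops
   required separately; parallel arcs are impossible by construction; opposite
   arcs allowed) and a weight function [w], only relevant on arcs. *)
Local Open Scope ring_scope.

Definition loopless (n : nat) (A : rel 'I_n) : Prop := forall x, ~~ A x x.

Definition nonneg_weights (R : realType) (n : nat) (A : rel 'I_n)
  (w : 'I_n -> 'I_n -> R) : Prop := forall x y, A x y -> 0 <= w x y.

Definition total_weight (R : realType) (n : nat) (A : rel 'I_n)
  (w : 'I_n -> 'I_n -> R) : R :=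
  \sum_(x : 'I_n) \sum_(y : 'I_n | A x y) w x y.

Definition cut_weight (R : realType) (n : nat) (A : rel 'I_n)
  (w : 'I_n -> 'I_n -> R) (X : {set 'I_n}) : R :=
  \sum_(x in X) \sum_(y in ~: X | A x y) w x y.

Definition mac (R : realType) (n : nat) (A : rel 'I_n)
  (w : 'I_n -> 'I_n -> R) : R :=
  \big[Num.max/0]_(X : {set 'I_n}) cut_weight A w X.

(* directed path x :: s: consecutive arcs and pairwise distinct vertices;
   its number of vertices is (size s).+1 *)
Definition dipath (n : nat) (A : rel 'I_n) (x : 'I_n) (s : seq 'I_n) : bool :=
  path A x s && uniq (x :: s).

Definition acyclic (n : nat) (A : rel 'I_n) : Prop :=
  forall (x : 'I_n) (s : seq 'I_n), path A x s -> last x s = x -> s = [::].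

Definition longest_path_vertices (n : nat) (A : rel 'I_n) (nu : nat) : Prop :=
  (exists x s, dipath A x s /\ (size s).+1 = nu) /\
  (forall x s, dipath A x s -> ((size s).+1 <= nu)%N).

Definition c_nu (R : realType) (nu : nat) : \bar R :=
  ereal_sup [set (c%:E : \bar R) | c in
    [set c : R | 0 <= c /\
      forall (n : nat) (A : rel 'I_n) (w : 'I_n -> 'I_n -> R),
        loopless A -> nonneg_weights A w -> acyclic A ->
        longest_path_vertices A nu ->
        c * total_weight A w <= mac A w]].

(* n_k^* ; note floor(sqrt(k/2)) = Nat.sqrt (k %/ 2) *)
Definition n_star (k : nat) : nat :=
  (2 * k + 2 * \sum_(1 <= i < (Nat.sqrt (k %/ 2)).+1)
                 (2 * ((2 * k - 2 * i ^ 2 - i) %/ 2) + i))%N.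

From HB Require Import structures.
From mathcomp Require Import all_boot all_order all_algebra.
From mathcomp Require Import boolp classical_sets reals constructive_ereal ereal exp.
From mathcomp Require Import ring lra zify.
From Stdlib Require PeanoNat.
Set Implicit Arguments. Unset Strict Implicit. Unset Printing Implicit Defensive.
Import Order.TTheory GRing.Theory Num.Theory.

(* Lower bounds on c_nu come from random cuts.  Give each vertex of an acyclic digraph
   its depth, the number of arcs of a longest path ending at it: arcs strictly increase
   the depth, and depths stay below nu.  Group the depths into mu + 1 consecutive blocks
   of L levels, pick a threshold tau < mu and, in every block, a uniformly random set of
   s of its L levels; a vertex lies in X when its level is picked in a block at most tau,
   or not picked in a block beyond tau.  An arc inside a block is then cut with
   probability exactly s (L - s) / (L (L - 1)); an arc from block b to a later block is
   cut with probability at least (s^2 + (mu - 1) s (L - s)) / (mu L^2), since the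
   threshold tau = b contributes (s / L)^2 and every other one at least s (L - s) / L^2.
   For L = 2h, s = h + t, mu = 4t the second bound dominates the first, so some cut
   carries a fraction (h + t) (h - t) / (2h (2h - 1)) of the weight.  Taking
   32 t^3 <= nu < 32 (t + 1)^3 and h close to nu / (8t + 2) makes this fraction at least
   1/4 + 1/(8 nu^(2/3) - 4), and n_k^* >= 32 as soon as k >= 7. *)

Section RandomCut.
Local Open Scope ring_scope.
Variables (R : realType) (n : nat) (A : rel 'I_n) (w : 'I_n -> 'I_n -> R).

Lemma cut_weight_le_mac X : cut_weight A w X <= mac A w.
Proof. exact: (le_bigmax _ (fun X => cut_weight A w X) X). Qed.

Lemma cut_weightE X : cut_weight A w X =
  \sum_x \sum_(y | A x y) ((x \in X) && (y \notin X))%:R * w x y.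
Proof.
rewrite /cut_weight [RHS](bigID (mem X)) /= [X in _ + X]big1 ?addr0; last first.
  by move=> x /negbTE xX; apply: big1 => y _; rewrite xX mul0r.
apply: eq_bigr => x ->; rewrite [RHS]big_mkcond [LHS]big_mkcond.
by apply: eq_bigr => y _; rewrite inE; case: (y \in X); case: (A x y); rewrite ?mul1r ?mul0r.
Qed.

Lemma mac_ge_random_cut (O : finType) (p : O -> R) (X : O -> {set 'I_n}) (c : R) :
  nonneg_weights A w -> (forall o, 0 <= p o) -> 0 < \sum_o p o ->
  (forall x y, A x y ->
     c * \sum_o p o <= \sum_o p o * ((x \in X o) && (y \notin X o))%:R) ->
  c * total_weight A w <= mac A w.
Proof.
move=> w_ge0 p_ge0 p_gt0 arc_cut.
have avg_le : \sum_o p o * cut_weight A w (X o) <= (\sum_o p o) * mac A w.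
  rewrite mulr_suml; apply: ler_sum => o _; apply: ler_wpM2l => //; exact: cut_weight_le_mac.
have avgE : \sum_o p o * cut_weight A w (X o) =
    \sum_x \sum_(y | A x y) w x y * \sum_o p o * ((x \in X o) && (y \notin X o))%:R.
  under eq_bigr => o _ do rewrite cut_weightE mulr_sumr.
  rewrite exchange_big; apply: eq_bigr => x _.
  under eq_bigr => o _ do rewrite mulr_sumr.
  rewrite (exchange_big_dep (A x)) //=; apply: eq_bigr => y Axy.
  rewrite [LHS]big_mkcond mulr_sumr; apply: eq_bigr => o _; rewrite Axy; ring.
have avg_ge : c * (\sum_o p o) * total_weight A w <= \sum_o p o * cut_weight A w (X o).
  rewrite avgE /total_weight mulr_sumr; apply: ler_sum => x _.
  rewrite mulr_sumr; apply: ler_sum => y Axy.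
  by rewrite mulrC; apply: ler_wpM2l; [exact: w_ge0 | exact: arc_cut].
rewrite -(ler_pM2l p_gt0) mulrA [_ * c]mulrC.
exact: le_trans avg_ge avg_le.
Qed.
End RandomCut.

Section Depth.
Variables (n : nat) (A : rel 'I_n).
Hypothesis acyclicA : acyclic A.

Lemma acyclic_path_uniq x s : path A x s -> uniq (x :: s).
Proof.
elim: s x => [//|y s IH] x /= /andP[Axy pys].
have /= -> := IH y pys; rewrite andbT; apply/negP => x_in.
have : path A x (y :: s) by rewrite /= Axy.
case/splitPr: x_in => p1 p2; rewrite cat_path /= => /and3P[p1_path last_x _].
have := @acyclicA x (rcons p1 x); rewrite rcons_path p1_path last_x last_rcons.
by move/(_ isT erefl)/(congr1 size); rewrite size_rcons.
Qed.

Lemma path_size_lt x s : path A x s -> size s < n.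
Proof.
move/acyclic_path_uniq/card_uniqP => /= card_s.
by have := max_card (mem (x :: s)); rewrite card_ord card_s.
Qed.

Definition ends_path (v : 'I_n) (m : nat) : bool :=
  [exists x, exists s : m.-tuple 'I_n, path A x s && (last x s == v)].

Definition depth (v : 'I_n) : nat := \max_(m < n | ends_path v m) m.

Lemma ends_path0 v : ends_path v 0.
Proof. by apply/existsP; exists v; apply/existsP; exists [tuple]; rewrite /= eqxx. Qed.

Lemma ends_path_lt v m : ends_path v m -> m < n.
Proof. by case/existsP=> x /existsP[s /andP[/path_size_lt]]; rewrite size_tuple. Qed.

Lemma ends_path_depth v : ends_path v (depth v).
Proof.
have n_gt0 : 0 < n by case: v => m; case: (n).
rewrite /depth (bigop.bigmax_eq_arg (Ordinal n_gt0)) /=; last exact: ends_path0.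
by case: arg_maxnP => //=; exact: ends_path0.
Qed.

Lemma depth_lt u v : A u v -> depth u < depth v.
Proof.
move=> Auv; have /existsP[x /existsP[s /andP[ps /eqP ls]]] := ends_path_depth u.
have ends_v : ends_path v (depth u).+1.
  apply/existsP; exists x; apply/existsP; exists [tuple of rcons s v].
  by rewrite /= rcons_path ps ls Auv last_rcons eqxx.
exact: (leq_bigmax_cond (Ordinal (ends_path_lt ends_v)) ends_v).
Qed.

Lemma depth_lt_longest nu v : longest_path_vertices A nu -> depth v < nu.
Proof.
move=> [_ longest]; have /existsP[x /existsP[s /andP[ps _]]] := ends_path_depth v.
by have := longest x s; rewrite /dipath ps acyclic_path_uniq //= size_tuple; apply.
Qed.
End Depth.

Lemma sum_bool_card (T : finType) (P : pred T) : \sum_(x : T) (P x : nat) = #|P|.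
Proof.
by rewrite -sum1_card [RHS]big_mkcond; apply: eq_bigr => x _; rewrite unfold_in; case: (P x).
Qed.

Lemma binS_pred n m : 0 < n -> 0 < m -> 'C(n, m) = 'C(n.-1, m.-1) + 'C(n.-1, m).
Proof. by case: n => // n _; case: m => // m _; rewrite binS addnC. Qed.

Section SubsetCounts.
Variables (L s : nat).
Implicit Types r : 'I_L.

Lemma sum_ksubsets : \sum_(V : {set 'I_L}) (#|V| == s : nat) = 'C(L, s).
Proof.
rewrite sum_bool_card -[X in 'C(X, _)]card_ord -card_draws.
by apply: eq_card => V; rewrite inE.
Qed.

Lemma sum_ksubsets_notin r : \sum_(V : {set 'I_L}) ((#|V| == s) && (r \notin V) : nat) = 'C(L.-1, s).
Proof.
have cardC1 : #|[set~ r]| = L.-1 by rewrite cardsC1 card_ord.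
rewrite sum_bool_card -cardC1 -cards_draws; apply: eq_card => V.
by rewrite !inE andbC finset.subsetC finset.sub1set inE.
Qed.

Lemma sum_ksubsets_notin2 r r' : r != r' ->
  \sum_(V : {set 'I_L}) ((#|V| == s) && (r \notin V) && (r' \notin V) : nat) = 'C(L.-2, s).
Proof.
move=> r_neq; have cardC2 : #|~: [set r; r']| = L.-2.
  by have := cardsC [set r; r']; rewrite cards2 r_neq card_ord => cardE; rewrite -[X in X.-2]cardE.
rewrite sum_bool_card -cardC2 -cards_draws; apply: eq_card => V.
rewrite !inE -topredE /= finset.subsetC finset.subUset !finset.sub1set !inE.
by case: (#|V| == s); case: (r \in V); case: (r' \in V).
Qed.

Lemma sum_ksubsets_in r : 0 < s ->
  \sum_(V : {set 'I_L}) ((#|V| == s) && (r \in V) : nat) = 'C(L.-1, s.-1).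
Proof.
move=> s_gt0; have L_gt0 : 0 < L by case: r => i; case: (L).
have : \sum_(V : {set 'I_L}) (#|V| == s : nat) = \sum_(V : {set 'I_L}) ((#|V| == s) && (r \in V) : nat)
                                  + \sum_(V : {set 'I_L}) ((#|V| == s) && (r \notin V) : nat).
  by rewrite -big_split; apply: eq_bigr => V _; case: (#|V| == s); case: (r \in V).
by rewrite sum_ksubsets sum_ksubsets_notin (binS_pred L_gt0 s_gt0) => /addIn.
Qed.

Lemma sum_ksubsets_in_notin r r' : r != r' -> 0 < s ->
  \sum_(V : {set 'I_L}) ((#|V| == s) && (r \in V) && (r' \notin V) : nat) = 'C(L.-2, s.-1).
Proof.
move=> r_neq s_gt0; have L_gt1 : 0 < L.-1.
  have := subset_leq_card (finset.subsetT [set r; r']).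
  by rewrite cards2 r_neq cardsT card_ord; case: (L).
have : \sum_(V : {set 'I_L}) ((#|V| == s) && (r' \notin V) : nat) =
         \sum_(V : {set 'I_L}) ((#|V| == s) && (r \in V) && (r' \notin V) : nat)
         + \sum_(V : {set 'I_L}) ((#|V| == s) && (r \notin V) && (r' \notin V) : nat).
  rewrite -big_split; apply: eq_bigr => V _.
  by case: (#|V| == s); case: (r \in V); case: (r' \in V).
by rewrite sum_ksubsets_notin sum_ksubsets_notin2 // (binS_pred L_gt1 s_gt0) => /addIn.
Qed.
End SubsetCounts.

Section BlockFamilies.
Variables (L mu s : nat).

Definition block_family := {ffun 'I_mu.+1 -> {set 'I_L}}.

Definition fam_weight (F : block_family) : nat := \prod_i (#|F i| == s : nat).

Lemma sum_fam_weight_prod (g : 'I_mu.+1 -> {set 'I_L} -> nat) :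
  \sum_(F : block_family) fam_weight F * \prod_i g i (F i) =
  \prod_i \sum_(V : {set 'I_L}) (#|V| == s : nat) * g i V.
Proof. by rewrite bigA_distr_bigA; apply: eq_bigr => F _; rewrite /fam_weight -big_split. Qed.

Lemma sum_fam_weight : \sum_(F : block_family) fam_weight F = 'C(L, s) ^ mu.+1.
Proof.
transitivity (\sum_(F : block_family) fam_weight F * \prod_(i : 'I_mu.+1) (fun _ _ => 1%N) i (F i)).
  by apply: eq_bigr => F _; rewrite big1_eq muln1.
rewrite (sum_fam_weight_prod (fun _ _ => 1%N)) (eq_bigr (fun=> 'C(L, s))) ?prod_nat_const ?card_ord //.
by move=> i _; rewrite -sum_ksubsets; apply: eq_bigr => V _; rewrite muln1.
Qed.

Lemma sum_fam_weight_block b (g : {set 'I_L} -> nat) :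
  \sum_(F : block_family) fam_weight F * g (F b) =
  (\sum_(V : {set 'I_L}) (#|V| == s : nat) * g V) * 'C(L, s) ^ mu.
Proof.
pose G i V := if i == b then g V else 1%N.
have -> : \sum_(F : block_family) fam_weight F * g (F b) =
          \sum_(F : block_family) fam_weight F * \prod_i G i (F i).
  by apply: eq_bigr => F _; rewrite /G -big_mkcond big_pred1_eq.
rewrite sum_fam_weight_prod (bigD1 b) //= {1}/G eqxx.
rewrite [X in _ * X](eq_bigr (fun=> 'C(L, s))) ?prod_nat_const ?cardC1 ?card_ord //.
by move=> i /negbTE i_neq; rewrite -sum_ksubsets; apply: eq_bigr => V _; rewrite /G i_neq muln1.
Qed.

Lemma sum_fam_weight_blocks b b' (g g' : {set 'I_L} -> nat) : b != b' ->
  \sum_(F : block_family) fam_weight F * (g (F b) * g' (F b')) =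
  (\sum_(V : {set 'I_L}) (#|V| == s : nat) * g V) *
  (\sum_(V : {set 'I_L}) (#|V| == s : nat) * g' V) * 'C(L, s) ^ mu.-1.
Proof.
move=> b_neq; pose G i V := ((if i == b then g V else 1) * (if i == b' then g' V else 1))%N.
have -> : \sum_(F : block_family) fam_weight F * (g (F b) * g' (F b')) =
          \sum_(F : block_family) fam_weight F * \prod_i G i (F i).
  by apply: eq_bigr => F _; rewrite /G big_split /= -!big_mkcond !big_pred1_eq.
rewrite sum_fam_weight_prod (bigD1 b) //= (bigD1 b') /=; last by rewrite eq_sym.
rewrite mulnA; congr (_ * _ * _).
- by apply: eq_bigr => V _; rewrite /G eqxx (negbTE b_neq) muln1.
- by apply: eq_bigr => V _; rewrite /G eqxx [b' == b]eq_sym (negbTE b_neq) mul1n.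
rewrite (eq_bigr (fun=> 'C(L, s))) ?prod_nat_const; last first.
  move=> i /andP[/negbTE i_neq /negbTE i_neq']; rewrite -sum_ksubsets.
  by apply: eq_bigr => V _; rewrite /G i_neq i_neq' !muln1.
congr (_ ^ _); transitivity #|~: [set b; b']|.
  by apply: eq_card => i; rewrite !inE negb_or.
by have := cardsC [set b; b']; rewrite cards2 b_neq card_ord; lia.
Qed.
End BlockFamilies.

Section LayeredCut.
Variables (L s mu : nat).
Hypotheses (s_gt0 : 0 < s) (s_lt_L : s < L) (L_le_2s : L - s <= s) (mu_gt0 : 0 < mu).
(* Makes the bound for arcs between blocks at least the one for arcs inside a block. *)
Hypothesis block_condition : (L - s) * mu * L <= L.-1 * (s + mu.-1 * (L - s)).

Let L_gt0 : 0 < L := ltn_trans s_gt0 s_lt_L.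

Local Notation C := 'C(L, s).
Local Notation block_family := (block_family L mu).
Local Notation fam_weight := (@fam_weight L mu s).

Definition block_cut (tau : 'I_mu) (F : block_family) (b : 'I_mu.+1) (r : 'I_L) : bool :=
  (r \in F b) == (b <= tau).

Definition arc_cut_count b b' r r' : nat :=
  \sum_(tau : 'I_mu) \sum_(F : block_family)
    fam_weight F * (block_cut tau F b r && ~~ block_cut tau F b' r').

Lemma sum_ksubsets_eqb (r : 'I_L) (c : bool) :
  \sum_(V : {set 'I_L}) (#|V| == s : nat) * ((r \in V) == c : nat) =
  if c then 'C(L.-1, s.-1) else 'C(L.-1, s).
Proof.
case: c; [rewrite -(@sum_ksubsets_in L s r s_gt0) | rewrite -(@sum_ksubsets_notin L s r)].
- by apply: eq_bigr => V _; rewrite mulnb eqb_id.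
- by apply: eq_bigr => V _; rewrite mulnb eqbF_neg.
Qed.

Lemma sum_ksubsets_neqb (r : 'I_L) (c : bool) :
  \sum_(V : {set 'I_L}) (#|V| == s : nat) * (~~ ((r \in V) == c) : nat) =
  if c then 'C(L.-1, s) else 'C(L.-1, s.-1).
Proof.
case: c; [rewrite -(@sum_ksubsets_notin L s r) | rewrite -(@sum_ksubsets_in L s r s_gt0)].
- by apply: eq_bigr => V _; rewrite mulnb eqb_id.
- by apply: eq_bigr => V _; rewrite mulnb eqbF_neg negbK.
Qed.

Lemma sum_ksubsets_eqb_neqb (r r' : 'I_L) (c : bool) : r != r' ->
  \sum_(V : {set 'I_L}) (#|V| == s : nat) * (((r \in V) == c) && ~~ ((r' \in V) == c) : nat) =
  'C(L.-2, s.-1).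
Proof.
move=> r_neq; case: c.
- rewrite -(sum_ksubsets_in_notin r_neq s_gt0).
  by apply: eq_bigr => V _; rewrite mulnb !eqb_id andbA.
- rewrite eq_sym in r_neq; rewrite -(sum_ksubsets_in_notin r_neq s_gt0).
  apply: eq_bigr => V _; rewrite mulnb !eqbF_neg negbK.
  by case: (r \in V); case: (r' \in V); case: (#|V| == s).
Qed.

Lemma mul_bin_in : L * 'C(L.-1, s.-1) = s * C.
Proof. by rewrite mul_bin_diag prednK. Qed.

Lemma mul_bin_notin : L * 'C(L.-1, s) = (L - s) * C.
Proof. exact: mul_bin_down. Qed.

Lemma mul_bin_in_notin : L * L.-1 * 'C(L.-2, s.-1) = s * (L - s) * C.
Proof.
have := mul_bin_down L.-1 s.-1; rewrite (_ : L.-1 - s.-1 = L - s); last by lia.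
by rewrite -mulnA => ->; rewrite mulnCA mul_bin_in mulnA [(L - s) * s]mulnC.
Qed.

Lemma bin_notin_le_in : 'C(L.-1, s) <= 'C(L.-1, s.-1).
Proof. by rewrite -(leq_pmul2l L_gt0) mul_bin_in mul_bin_notin leq_mul2r L_le_2s orbT. Qed.

Lemma sum_fam_weight_thresholds :
  \sum_(tau : 'I_mu) \sum_(F : block_family) fam_weight F = mu * C ^ mu.+1.
Proof. by rewrite (eq_bigr _ (fun tau _ => sum_fam_weight L mu s)) sum_nat_const card_ord. Qed.

Lemma arc_cut_count_same (b : 'I_mu.+1) (r r' : 'I_L) : r != r' ->
  arc_cut_count b b r r' = mu * ('C(L.-2, s.-1) * C ^ mu).
Proof.
move=> r_neq; have countE (tau : 'I_mu) : \sum_(F : block_family)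
    fam_weight F * (block_cut tau F b r && ~~ block_cut tau F b r') = 'C(L.-2, s.-1) * C ^ mu.
  rewrite -(sum_ksubsets_eqb_neqb (b <= tau) r_neq).
  exact: (sum_fam_weight_block s b (fun V =>
            (((r \in V) == (b <= tau)) && ~~ ((r' \in V) == (b <= tau)) : nat))).
by rewrite /arc_cut_count (eq_bigr _ (fun tau _ => countE tau)) sum_nat_const card_ord.
Qed.

Lemma arc_cut_count_cross (b b' : 'I_mu.+1) (r r' : 'I_L) : b < b' ->
  ('C(L.-1, s.-1) * 'C(L.-1, s.-1) + mu.-1 * ('C(L.-1, s.-1) * 'C(L.-1, s))) * C ^ mu.-1
  <= arc_cut_count b b' r r'.
Proof.
move=> b_lt; have b_neq : b != b' by rewrite neq_ltn b_lt.
set A1 := 'C(L.-1, s.-1); set A0 := 'C(L.-1, s).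
pose f (tau : 'I_mu) := (if b <= tau then A1 else A0) * (if b' <= tau then A0 else A1).
have countE (tau : 'I_mu) : \sum_(F : block_family)
    fam_weight F * (block_cut tau F b r && ~~ block_cut tau F b' r') = f tau * C ^ mu.-1.
  pose in_b (V : {set 'I_L}) := ((r \in V) == (b <= tau) : nat).
  pose out_b' (V : {set 'I_L}) := (~~ ((r' \in V) == (b' <= tau)) : nat).
  rewrite (eq_bigr (fun F => fam_weight F * (in_b (F b) * out_b' (F b')))); last first.
    by move=> F _; rewrite mulnb.
  by rewrite (sum_fam_weight_blocks s in_b out_b' b_neq) sum_ksubsets_eqb sum_ksubsets_neqb.
rewrite /arc_cut_count (eq_bigr _ (fun tau _ => countE tau)) -big_distrl /= leq_mul2r.
apply/orP; right; have b_lt_mu : b < mu by have := ltn_ord b'; lia.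
rewrite (bigD1 (Ordinal b_lt_mu)) //=; apply: leq_add.
  by rewrite /f /= leqnn (_ : b' <= b = false) //; lia.
have -> : mu.-1 * (A1 * A0) = \sum_(tau : 'I_mu | tau != Ordinal b_lt_mu) A1 * A0.
  by rewrite sum_nat_const cardC1 card_ord.
apply: leq_sum => tau _; rewrite /f; case: (leqP b tau) => b_tau.
  by apply: leq_mul => //; case: ifP => // _; exact: bin_notin_le_in.
by rewrite (_ : b' <= tau = false) 1?mulnC //; lia.
Qed.

Lemma arc_cut_count_ge (b b' : 'I_mu.+1) (r r' : 'I_L) : b < b' \/ b = b' /\ r != r' ->
  s * (L - s) * (mu * C ^ mu.+1) <= L * L.-1 * arc_cut_count b b' r r'.
Proof.
case=> [b_lt | [<- r_neq]]; last first.
  rewrite arc_cut_count_same // expnS.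
  rewrite (_ : L * L.-1 * _ = mu * C ^ mu * (L * L.-1 * 'C(L.-2, s.-1))); last by ring.
  by rewrite mul_bin_in_notin; apply/eq_leq; ring.
apply: leq_trans (leq_mul (leqnn _) (arc_cut_count_cross r r' b_lt)).
rewrite -(leq_pmul2l (_ : 0 < L * L)) ?muln_gt0 ?L_gt0 //.
set A1 := 'C(L.-1, s.-1); set A0 := 'C(L.-1, s); set P := C ^ mu.-1.
have CE : C ^ mu.+1 = C * C * P by rewrite /P -[in LHS](prednK mu_gt0) !expnS mulnA.
have lhsE : L * L * (s * (L - s) * (mu * C ^ mu.+1)) = s * L * C * C * P * ((L - s) * mu * L).
  by rewrite CE; ring.
have rhsE : L * L * (L * L.-1 * ((A1 * A1 + mu.-1 * (A1 * A0)) * P)) =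
            s * L * C * C * P * (L.-1 * (s + mu.-1 * (L - s))).
  transitivity (L * L.-1 * P * ((L * A1) * (L * A1) + mu.-1 * ((L * A1) * (L * A0)))).
    by ring.
  by rewrite mul_bin_in mul_bin_notin; ring.
by rewrite lhsE rhsE leq_mul2l block_condition orbT.
Qed.

Definition level_block (l : nat) : 'I_mu.+1 := inord (l %/ L).

Definition level_pos (l : nat) : 'I_L := Ordinal (ltn_pmod l L_gt0).

Lemma level_lt l l' : l < l' -> l' < mu.+1 * L ->
  level_block l < level_block l' \/
  level_block l = level_block l' /\ level_pos l != level_pos l'.
Proof.
move=> l_lt l'_lt; have q'_lt : l' %/ L < mu.+1 by rewrite ltn_divLR.
have q_le : l %/ L <= l' %/ L by apply/leq_div2r/ltnW.
have q_lt : l %/ L < mu.+1 := leq_ltn_trans q_le q'_lt.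
rewrite /level_block !inordK //; move: q_le; rewrite leq_eqVlt => /orP[/eqP q_eq|]; last by left.
right; split; first by apply: ord_inj; rewrite !inordK.
apply/negP => /eqP [r_eq].
by have := l_lt; rewrite (divn_eq l L) (divn_eq l' L) q_eq r_eq ltnn.
Qed.

Definition layered_cut (n : nat) (A : rel 'I_n) (o : 'I_mu * block_family) : {set 'I_n} :=
  [set v | block_cut o.1 o.2 (level_block (depth A v)) (level_pos (depth A v))].

Lemma mac_ge_layered_cut (R : realType) n (A : rel 'I_n) (w : 'I_n -> 'I_n -> R) nu :
  nonneg_weights A w -> acyclic A -> longest_path_vertices A nu -> nu <= mu.+1 * L ->
  ((s * (L - s))%:R / (L * L.-1)%:R * total_weight A w <= mac A w)%R.
Proof.
move=> w_ge0 acyclicA longest nu_le.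
have sum_pairE (f : 'I_mu -> block_family -> nat) :
    (\sum_(o : 'I_mu * block_family) (f o.1 o.2)%:R = (\sum_tau \sum_F f tau F)%:R :> R)%R.
  by rewrite natr_sum; under eq_bigr do rewrite natr_sum; rewrite pair_bigA.
apply: (mac_ge_random_cut (p := fun o => (fam_weight o.2)%:R%R) (X := layered_cut A)) => //.
- rewrite (sum_pairE (fun _ F => fam_weight F)) sum_fam_weight_thresholds ltr0n.
  by rewrite muln_gt0 mu_gt0 expn_gt0 bin_gt0 ltnW.
move=> x y Axy; have depth_lt_xy := depth_lt acyclicA Axy.
have depth_y : depth A y < mu.+1 * L := leq_trans (depth_lt_longest acyclicA y longest) nu_le.
rewrite (sum_pairE (fun _ F => fam_weight F)) sum_fam_weight_thresholds.
under eq_bigr do rewrite !inE -natrM.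
rewrite (sum_pairE (fun tau F => fam_weight F *
  (block_cut tau F (level_block (depth A x)) (level_pos (depth A x)) &&
   ~~ block_cut tau F (level_block (depth A y)) (level_pos (depth A y))))).
have LL_gt0 : 0 < L * L.-1 by rewrite muln_gt0 L_gt0; lia.
rewrite mulrAC ler_pdivrMr ?ltr0n //.
rewrite -!natrM ler_nat [X in _ <= X]mulnC.
exact: arc_cut_count_ge (level_lt depth_lt_xy depth_y).
Qed.
End LayeredCut.

Section SexticBound.
Local Open Scope ring_scope.
Variable R : realFieldType.
Implicit Types x y t h nu : R.

Lemma sextic_le_small x y : 16/5 <= x <= 7 -> 32 <= y -> x ^+ 6 <= y ^+ 2 * (x - 2) ^+ 3.
Proof.
move=> /andP[x_ge x_le] y_ge.
have sq_le : x ^+ 2 <= 10 * (x - 2) by nra.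
have cube_le : (x ^+ 2) ^+ 3 <= (10 * (x - 2)) ^+ 3.
  by apply: lerXn2r; rewrite ?nnegrE; nra.
rewrite -exprM exprMn in cube_le; apply: le_trans cube_le _.
have : 0 <= (x - 2) ^+ 3 by apply: exprn_ge0; lra.
have : 1024 <= y ^+ 2 by nra.
rewrite [10 ^+ 3](_ : _ = 1000); last by rewrite !exprS expr0; lra.
nra.
Qed.

Lemma sextic_le_large x : 7 <= x <= 33 -> x ^+ 6 <= 64 * (x - 1) ^+ 2 * (x - 2) ^+ 3.
Proof.
move=> /andP[x_ge x_le]; set u := x - 2.
have -> : x = u + 2 by rewrite /u; ring.
have u_ge : 5 <= u by rewrite /u; lra.
have u_le : u <= 31 by rewrite /u; lra.
have u5_ge : 0 <= u ^+ 5 by apply: exprn_ge0; lra.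
have u4_ge : 0 <= u ^+ 4 by apply: exprn_ge0; lra.
have u3_ge : 125 <= u ^+ 3 by rewrite !exprS expr0; nra.
have u2_ge : 25 <= u ^+ 2 by nra.
have -> : (u + 2) ^+ 6 = u ^+ 5 * u + 12 * u ^+ 5 + 60 * u ^+ 4 + 160 * u ^+ 3
                         + 240 * u ^+ 2 + 192 * u + 64 by ring.
have -> : 64 * (u + 2 - 1) ^+ 2 * u ^+ 3 = 64 * u ^+ 5 + 128 * u ^+ 4 + 64 * u ^+ 3 by ring.
have -> : u ^+ 4 = u ^+ 3 * u by rewrite exprS mulrC.
have -> : u ^+ 5 = u ^+ 3 * u ^+ 2 by rewrite -exprD.
nra.
Qed.

Lemma sextic_le x y : 32 <= y -> y <= 256 -> 8 * x - 8 <= y -> y <= 10 * x ->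
  x ^+ 6 <= y ^+ 2 * (x - 2) ^+ 3.
Proof.
move=> y_ge y_le y_ge' y_le'.
have [x_le|x_gt] := lerP x 7; first by apply: sextic_le_small => //; apply/andP; split; lra.
apply: le_trans (sextic_le_large _) _; first by apply/andP; split; lra.
apply: ler_wpM2r; first by apply: exprn_ge0; lra.
rewrite [_ * _](_ : _ = (8 * (x - 1)) ^+ 2); last by ring.
by apply: lerXn2r; rewrite ?nnegrE; lra.
Qed.

Lemma sextic_le_scaled t h nu : 1 <= t -> 32 * t ^+ 3 <= nu -> nu <= 256 * t ^+ 3 ->
  (8 * t + 2) * (h - 1) <= nu -> nu <= (8 * t + 2) * h ->
  h ^+ 6 <= nu ^+ 2 * (h - 2 * t ^+ 2) ^+ 3.
Proof.
move=> t_ge nu_ge nu_le nu_ge' nu_le'.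
have t_gt0 : 0 < t by lra.
have t2_gt0 : 0 < t ^+ 2 by apply: exprn_gt0.
have t3_gt0 : 0 < t ^+ 3 by apply: exprn_gt0.
set x := h / t ^+ 2; set y := nu / t ^+ 3.
have hE : h = x * t ^+ 2 by rewrite /x mulfVK // gt_eqF.
have nuE : nu = y * t ^+ 3 by rewrite /y mulfVK // gt_eqF.
have t3E : t ^+ 3 = t * t ^+ 2 by rewrite exprS.
have t_le2 : t <= t ^+ 2 by rewrite expr2; nra.
have t2_le3 : t ^+ 2 <= t ^+ 3 by rewrite t3E; nra.
have y_ge : 32 <= y by rewrite nuE in nu_ge; rewrite -(ler_pM2r t3_gt0); lra.
have y_le : y <= 256 by rewrite nuE in nu_le; rewrite -(ler_pM2r t3_gt0); lra.
have y_le' : y <= 10 * x.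
  rewrite nuE hE t3E in nu_le'; rewrite -(ler_pM2r t3_gt0) t3E.
  have x_ge0 : 0 <= x by nra.
  nra.
have y_ge' : 8 * x - 8 <= y.
  rewrite nuE hE t3E in nu_ge'; rewrite -(ler_pM2r t3_gt0) t3E.
  have x_ge0 : 0 <= x by nra.
  nra.
have /(ler_wpM2r (exprn_ge0 6 (ltW t2_gt0))) := sextic_le y_ge y_le y_ge' y_le'.
by rewrite hE nuE; congr (_ <= _); ring.
Qed.
End SexticBound.

Section TargetBound.
Local Open Scope ring_scope.
Variable R : realType.

Lemma powR_two_thirds_cube (x : R) : 0 <= x -> (x `^ (2 / 3)) ^+ 3 = x ^+ 2.
Proof.
move=> x_ge0; rewrite -powR_mulrn ?powR_ge0 // -powRrM.
have -> : (2 / 3 * 3%:R : R) = 2%:R by rewrite -[3%:R]/(3 : R); field.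
by rewrite powR_mulrn.
Qed.

(* With g := (h^2 - t^2) / (h - 2 t^2) the ratio equals 1/4 + 1/(8 g - 4), and
   g^3 <= h^6 / (h - 2 t^2)^3 <= nu^2 by the sextic bound. *)
Lemma target_le_cut_ratio (t h nu : R) : 1 <= t -> 32 * t ^+ 3 <= nu -> nu <= 256 * t ^+ 3 ->
  (8 * t + 2) * (h - 1) <= nu -> nu <= (8 * t + 2) * h ->
  1 / 4 + 1 / (8 * nu `^ (2 / 3) - 4) <= (h + t) * (h - t) / (2 * h * (2 * h - 1)).
Proof.
move=> t_ge nu_ge nu_le nu_ge' nu_le'.
have t2_gt0 : 0 < t ^+ 2 by apply: exprn_gt0; lra.
have t_le2 : t <= t ^+ 2 by rewrite expr2; nra.
have h_gt : 2 * t ^+ 2 < h.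
  have t3E : t ^+ 3 = t * t ^+ 2 by rewrite exprS.
  have t3_gt : 4 * t ^+ 2 < 16 * (t * t ^+ 2) by nra.
  rewrite -(ltr_pM2l (_ : 0 < 8 * t + 2)); last lra.
  by rewrite t3E in nu_ge; lra.
set z := nu `^ (2 / 3).
have z_ge0 : 0 <= z by apply: powR_ge0.
have z3E : z ^+ 3 = nu ^+ 2 by apply: powR_two_thirds_cube; lra.
have t2_le_h2 : t ^+ 2 <= h ^+ 2 by apply: lerXn2r; rewrite ?nnegrE; lra.
set g := (h ^+ 2 - t ^+ 2) / (h - 2 * t ^+ 2).
have g_ge0 : 0 <= g by apply: divr_ge0; lra.
have g_le_z : g <= z.
  rewrite -(ler_pXn2r (n := 3)) ?nnegrE // z3E /g exprMn exprVn.
  rewrite ler_pdivrMr; last by apply: exprn_gt0; lra.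
  apply: le_trans (sextic_le_scaled t_ge nu_ge nu_le nu_ge' nu_le').
  rewrite (_ : h ^+ 6 = (h ^+ 2) ^+ 3); last by rewrite -exprM.
  by apply: lerXn2r; rewrite ?nnegrE; lra.
have gE : 8 * g - 4 = 4 * h * (2 * h - 1) / (h - 2 * t ^+ 2) by rewrite /g; field; lra.
have g_gt : 0 < 8 * g - 4.
  by rewrite gE; apply: divr_gt0; [apply: mulr_gt0|]; lra.
have ratioE : 1 / 4 + 1 / (4 * h * (2 * h - 1) / (h - 2 * t ^+ 2)) =
              (h + t) * (h - t) / (2 * h * (2 * h - 1)) by field; lra.
rewrite -ratioE -gE lerD2l ler_pdivrMr; last lra.
by rewrite mulrC mulrA ler_pdivlMr // mul1r; lra.
Qed.
End TargetBound.

Lemma block_condition_half h t : 0 < t -> t <= h ->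
  (2 * h - (h + t)) * (4 * t) * (2 * h) <= (2 * h).-1 * (h + t + (4 * t).-1 * (2 * h - (h + t))).
Proof.
move=> t_gt0 t_le; have [u ->] : exists u, h = u + t by exists (h - t); lia.
rewrite (_ : 2 * (u + t) - (u + t + t) = u); last by lia.
rewrite (_ : (2 * (u + t)).-1 = 2 * u + 2 * t - 1); last by lia.
rewrite (_ : (4 * t).-1 = 4 * t - 1); last by lia.
nia.
Qed.

Lemma cube_bracket nu : 32 <= nu ->
  exists2 t, 0 < t & 32 * t ^ 3 <= nu < 32 * t.+1 ^ 3.
Proof.
move=> nu_ge; have cubeE m : m ^ 3 = m * m * m by rewrite !expnS expn0 muln1 mulnA.
have ex_t : exists t, 32 * t ^ 3 <= nu by exists 0.
have t_bound t : 32 * t ^ 3 <= nu -> t <= nu by rewrite cubeE; nia.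
case: (ex_maxnP ex_t t_bound) => t t_cube t_max; exists t.
- by have := t_max 1; rewrite cubeE; lia.
- by rewrite t_cube ltnNge; apply/negP => /t_max; lia.
Qed.

Lemma n_star_ge32 k : 7 <= k -> 32 <= n_star k.
Proof.
move=> k_ge; have sqrt_ge1 : 1 <= Nat.sqrt (k %/ 2).
  by apply/ssrnat.leP; apply: (PeanoNat.Nat.sqrt_le_mono 1); apply/ssrnat.leP; lia.
by rewrite /n_star big_ltn; lia.
Qed.

Local Open Scope ring_scope.

Theorem c_nu_ge (R : realType) nu : (32 <= nu)%N ->
  ((1 / 4 + 1 / (8 * nu%:R `^ (2 / 3) - 4) : R)%:E <= c_nu R nu)%E.
Proof.
move=> nu_ge; have [t t_gt0 /andP[nu_ge' nu_lt]] := cube_bracket nu_ge.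
have [h h_lo h_hi] : exists2 h, ((8 * t + 2) * (h - 1) <= nu)%N & (nu <= (8 * t + 2) * h)%N.
  by exists (nu %/ (8 * t + 2)).+1; lia.
have nu_le : (nu <= 256 * t ^ 3)%N by move: nu_lt; rewrite !expnS expn0 !muln1; nia.
have t_lt_h : (t < h)%N by move: nu_ge'; rewrite !expnS expn0 !muln1; nia.
pose ratio : R := ((h + t) * (2 * h - (h + t)))%:R / (2 * h * (2 * h).-1)%:R.
apply: (@le_trans _ _ ratio%:E).
  rewrite lee_fin /ratio (_ : (2 * h - (h + t) = h - t)%N); last by lia.
  rewrite (_ : ((2 * h).-1 = 2 * h - 1)%N); last by lia.
  rewrite !natrM natrD !natrB ?natrM ?(ltnW t_lt_h) ?muln_gt0 //; try lia.
  apply: target_le_cut_ratio; rewrite ?ler1n // -?natrX.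
  - by rewrite -[32]/(32%:R) -natrM ler_nat.
  - by rewrite -[256]/(256%:R) -natrM ler_nat.
  - move: h_lo; rewrite -(ler_nat R) natrM natrB; last by lia.
    by rewrite natrD natrM.
  - by move: h_hi; rewrite -(ler_nat R) natrM natrD natrM.
apply: ereal_sup_ubound; exists ratio => //; split; first exact: divr_ge0.
move=> n A w _ w_ge0 acyclicA longest.
have block_cond := block_condition_half t_gt0 (ltnW t_lt_h).
by apply: (mac_ge_layered_cut _ _ _ _ block_cond w_ge0 acyclicA longest); lia.
Qed.

Theorem mainTheorem14 (R : realType) (k : nat) : (7 <= k)%N ->
  ((1 / 4 + 1 / (8 * (n_star k)%:R `^ (2 / 3) - 4) : R)%:E <= c_nu R (n_star k))%E.
Proof. by move=> k_ge; apply/c_nu_ge/n_star_ge32. Qed.
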